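(* For every $s\in\mathbb{C}$ with $\Re(s)>1$, $$(2^s+1)\sum_{n\ge1}\frac{t_{n-1}}{n^s}+(2^s-1)\sum_{n\ge1}\frac{t_n}{n^s}=2^s\zeta(s).$$
   Context: For $n\ge 0$, let $t_n\in\{0,1\}$ denote the sum of the binary digits of $n$ reduced modulo $2$ (so $t_0=0$; this is the Thue–Morse sequence). $\zeta(s)=\sum_{n\ge1}n^{-s}$ is the Riemann zeta function. *)

From Stdlib Require Import Reals Lra Lia.
From Coquelicot Require Import Coquelicot.
Open Scope R_scope.

(* Sum of binary digits of n; fuel argument [f] is >= n, which suffices
   since n halves at each step. *)
Fixpoint bin_digit_sum_aux (f n : nat) : nat :=
  match f with
  | O => O
  | S f' => match n with
            | O => O
            | S _ => (n mod 2 + bin_digit_sum_aux f' (Nat.div2 n))%nat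
            end
  end.

Definition bin_digit_sum (n : nat) : nat := bin_digit_sum_aux n n.

Definition thue_morse (n : nat) : nat := (bin_digit_sum n mod 2)%nat.

Definition Cexp (z : C) : C :=
  (exp (Re z) * cos (Im z), exp (Re z) * sin (Im z)).

Definition Cpow_pos (x : R) (s : C) : C := Cexp (Cmult s (RtoC (ln x))).

Definition nat_pow_neg (n : nat) (s : C) : C := Cinv (Cpow_pos (INR n) s).

(* Write a_n = t_(n-1) n^-s, b_n = t_n n^-s and z_n = n^-s.  Since
   t_(2j) = t_j and t_(2j+1) = 1 - t_j, the coefficient of n^-s in a + b - z
   vanishes for odd n = 2j+1 and equals t_(j+1) - t_j for even n = 2(j+1).
   Hence A + B - Z = 2^-s (B - A), which rearranges to the identity; absolute
   convergence of all three series follows by comparison with the real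
   p-series for p = Re s > 1. *)
From Stdlib Require Import Reals Lra Lia.
From Coquelicot Require Import Coquelicot.
Open Scope R_scope.

Lemma bin_digit_sum_aux_fuel f g n : (n <= f)%nat -> (n <= g)%nat ->
  bin_digit_sum_aux f n = bin_digit_sum_aux g n.
Proof.
  revert g n; induction f as [|f IH]; intros g n Hf Hg.
  - replace n with 0%nat by lia; now destruct g.
  - destruct n as [|n]; [now destruct g|].
    destruct g as [|g]; [lia|]; cbn [bin_digit_sum_aux].
    pose proof (Nat.le_div2 n); f_equal; apply IH; lia.
Qed.

Lemma bin_digit_sum_unfold n :
  bin_digit_sum n = (n mod 2 + bin_digit_sum (Nat.div2 n))%nat.
Proof.
  destruct n as [|n]; [reflexivity|].
  unfold bin_digit_sum at 1; cbn [bin_digit_sum_aux]; f_equal.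
  pose proof (Nat.le_div2 n); apply bin_digit_sum_aux_fuel; lia.
Qed.

Lemma thue_morse_double j : thue_morse (2 * j) = thue_morse j.
Proof.
  unfold thue_morse; rewrite bin_digit_sum_unfold, Nat.div2_double.
  now rewrite Nat.mul_comm, Nat.Div0.mod_mul.
Qed.

Lemma thue_morse_double_succ j :
  INR (thue_morse (S (2 * j))) = 1 - INR (thue_morse j).
Proof.
  unfold thue_morse; rewrite bin_digit_sum_unfold, Nat.div2_succ_double.
  replace (S (2 * j) mod 2)%nat with 1%nat
    by (symmetry; rewrite <- Nat.add_1_r, Nat.mul_comm, Nat.add_comm;
        apply Nat.Div0.mod_add).
  set (m := bin_digit_sum j).
  assert (Hm : ((1 + m) mod 2 + m mod 2 = 1)%nat).
  { pose proof (Nat.div_mod_eq m 2); pose proof (Nat.div_mod_eq (1 + m) 2).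
    pose proof (Nat.mod_upper_bound m 2); pose proof (Nat.mod_upper_bound (1 + m) 2).
    lia. }
  apply (f_equal INR) in Hm; rewrite plus_INR in Hm; change (INR 1) with 1 in Hm; lra.
Qed.

Lemma thue_morse_le_1 n : INR (thue_morse n) <= 1.
Proof.
  apply (le_INR _ 1); unfold thue_morse.
  pose proof (Nat.mod_upper_bound (bin_digit_sum n) 2); lia.
Qed.

Lemma Cexp_add a b : Cexp (a + b) = (Cexp a * Cexp b)%C.
Proof.
  destruct a as [a1 a2], b as [b1 b2]; unfold Cexp, Cplus, Cmult; simpl.
  rewrite exp_plus, cos_plus, sin_plus; f_equal; ring.
Qed.

Lemma Cmod_Cexp z : Cmod (Cexp z) = exp (Re z).
Proof.
  destruct z as [x y]; unfold Cexp, Cmod; simpl.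
  pose proof (sin2_cos2 y) as Hsc; unfold Rsqr in Hsc.
  match goal with |- sqrt ?e = _ =>
    replace e with (exp x ^ 2 * (sin y * sin y + cos y * cos y)) by ring end.
  rewrite Hsc, Rmult_1_r, sqrt_pow2; [reflexivity | left; apply exp_pos].
Qed.

Lemma Cexp_neq0 z : Cexp z <> 0%C.
Proof.
  intro H; pose proof (Cmod_Cexp z) as E; rewrite H, Cmod_0 in E.
  pose proof (exp_pos (Re z)); lra.
Qed.

Lemma Cpow_pos_mul x y s : 0 < x -> 0 < y ->
  Cpow_pos (x * y) s = (Cpow_pos x s * Cpow_pos y s)%C.
Proof.
  intros Hx Hy; unfold Cpow_pos.
  rewrite ln_mult, <- Cexp_add, <- Cmult_plus_distr_l, RtoC_plus by assumption.
  reflexivity.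
Qed.

Lemma Cmod_Cpow_pos x s : Cmod (Cpow_pos x s) = Rpower x (Re s).
Proof.
  unfold Cpow_pos, Rpower; rewrite Cmod_Cexp.
  destruct s as [a b]; unfold Cmult, RtoC; simpl; f_equal; ring.
Qed.

Lemma nat_pow_neg_mul m n s : (0 < m)%nat -> (0 < n)%nat ->
  nat_pow_neg (m * n) s = (nat_pow_neg m s * nat_pow_neg n s)%C.
Proof.
  intros Hm Hn; unfold nat_pow_neg.
  rewrite mult_INR, Cpow_pos_mul by (apply lt_0_INR; assumption).
  field; split; apply Cexp_neq0.
Qed.

Lemma Cmod_nat_pow_neg n s : Cmod (nat_pow_neg n s) = Rpower (INR n) (- Re s).
Proof.
  unfold nat_pow_neg; rewrite Cmod_inv by apply Cexp_neq0.
  now rewrite Cmod_Cpow_pos, Rpower_Ropp.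
Qed.

Lemma Rpower_neg_le_increment p x : 1 < p -> 1 < x ->
  (p - 1) * Rpower x (- p) <= Rpower (x - 1) (1 - p) - Rpower x (1 - p).
Proof.
  intros Hp Hx.
  set (q := (x - 1) / x).
  assert (Hq : 0 < q) by (apply Rdiv_lt_0_compat; lra).
  assert (Hx1 : Rpower (x - 1) (1 - p) = Rpower x (1 - p) * Rpower q (1 - p)).
  { rewrite Rpower_mult_distr by lra; f_equal; unfold q; field; lra. }
  assert (Hxp : Rpower x (- p) = Rpower x (1 - p) * / x).
  { replace (- p) with ((1 - p) + - (1)) by ring.
    now rewrite Rpower_plus, Rpower_Ropp, Rpower_1 by lra. }
  assert (Hlnq : ln q <= - / x).
  { pose proof (exp_ineq1_le (ln q)); rewrite exp_ln in * by assumption.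
    replace (- / x) with (q - 1) by (unfold q; field; lra); lra. }
  assert (Hqp : 1 + (p - 1) * / x <= Rpower q (1 - p)).
  { unfold Rpower; eapply Rle_trans; [|apply exp_ineq1_le]; nra. }
  rewrite Hx1, Hxp.
  pose proof (exp_pos ((1 - p) * ln x)); fold (Rpower x (1 - p)) in *.
  nra.
Qed.

Lemma sum_n_Rpower_neg_le p n : 1 < p ->
  sum_n (fun k => Rpower (INR (S k)) (- p)) n
    <= p / (p - 1) - Rpower (INR (S n)) (1 - p) / (p - 1).
Proof.
  intros Hp; induction n as [|n IH].
  - rewrite sum_O; change (INR 1) with 1; unfold Rpower.
    rewrite ln_1, !Rmult_0_r, exp_0; apply Req_le; field; lra.
  - rewrite sum_Sn; change (plus ?a ?b) with (a + b).
    assert (Hn : 1 < INR (S (S n))) by (rewrite !S_INR; pose proof (pos_INR n); lra).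
    pose proof (Rpower_neg_le_increment p _ Hp Hn) as Hinc.
    replace (INR (S (S n)) - 1) with (INR (S n)) in Hinc by (rewrite (S_INR (S n)); ring).
    apply Rmult_le_compat_l with (r := / (p - 1)) in Hinc;
      [|left; apply Rinv_0_lt_compat; lra].
    rewrite <- Rmult_assoc, Rinv_l, Rmult_1_l in Hinc by lra.
    unfold Rdiv in *; lra.
Qed.

Lemma ex_series_Rpower_neg p : 1 < p ->
  ex_series (fun k => Rpower (INR (S k)) (- p)).
Proof.
  intros Hp.
  assert (Hlim : ex_finite_lim_seq (sum_n (fun k => Rpower (INR (S k)) (- p)))).
  { apply ex_finite_lim_seq_incr with (M := p / (p - 1)); intros n.
    - rewrite sum_Sn; change (plus ?a ?b) with (a + b).
      pose proof (exp_pos (- p * ln (INR (S (S n))))); unfold Rpower; lra.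
    - eapply Rle_trans; [now apply sum_n_Rpower_neg_le|].
      pose proof (exp_pos ((1 - p) * ln (INR (S n)))); fold (Rpower (INR (S n)) (1 - p)) in *.
      assert (0 < / (p - 1)) by (apply Rinv_0_lt_compat; lra).
      unfold Rdiv; nra. }
  destruct Hlim as [l Hl]; now exists l.
Qed.

Lemma ex_series_dirichlet_bounded (a : nat -> R) s : 1 < Re s ->
  (forall k, Rabs (a k) <= 1) ->
  ex_series (fun k => (RtoC (a k) * nat_pow_neg (S k) s)%C).
Proof.
  intros Hs Ha.
  apply (@ex_series_le C_AbsRing C_CompleteNormedModule _
           (fun k => Rpower (INR (S k)) (- Re s))); [|exact (ex_series_Rpower_neg _ Hs)].
  intros k; change (Cmod (RtoC (a k) * nat_pow_neg (S k) s) <= Rpower (INR (S k)) (- Re s)).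
  rewrite Cmod_mult, Cmod_R, Cmod_nat_pow_neg.
  pose proof (exp_pos (- Re s * ln (INR (S k)))); fold (Rpower (INR (S k)) (- Re s)) in *.
  specialize (Ha k); pose proof (Rabs_pos (a k)); nra.
Qed.

Lemma sum_n_odd_terms {G : AbelianMonoid} (c : nat -> G) :
  (forall j, c (2 * j)%nat = zero) ->
  forall j, sum_n c (S (2 * j)) = sum_n (fun i => c (S (2 * i))) j.
Proof.
  intros Heven; induction j as [|j IH].
  - rewrite sum_Sn, !sum_O; change (c 0%nat) with (c (2 * 0)%nat).
    now rewrite Heven, plus_zero_l.
  - replace (S (2 * S j)) with (S (S (S (2 * j)))) by lia.
    rewrite (sum_Sn c (S (S (2 * j)))), (sum_Sn c (S (2 * j))), IH, sum_Sn.
    replace (S (S (2 * j))) with (2 * S j)%nat by lia.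
    rewrite Heven, plus_zero_r; do 2 f_equal; lia.
Qed.

Lemma is_series_odd_terms {K : AbsRing} {V : NormedModule K} (c : nat -> V) l :
  (forall j, c (2 * j)%nat = zero) -> is_series c l ->
  is_series (fun j => c (S (2 * j))) l.
Proof.
  intros Heven Hc; unfold is_series.
  apply filterlim_ext with (f := fun j => sum_n c (S (2 * j))).
  { intros j; now apply sum_n_odd_terms. }
  apply filterlim_comp with (G := eventually) (g := sum_n c); [|exact Hc].
  intros P [N HN]; exists N; intros n Hn; apply HN; lia.
Qed.

Lemma thue_morse_dirichlet_relation s A B Z :
  is_series (fun k => (RtoC (INR (thue_morse k)) * nat_pow_neg (S k) s)%C) A ->
  is_series (fun k => (RtoC (INR (thue_morse (S k))) * nat_pow_neg (S k) s)%C) B ->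
  is_series (fun k => nat_pow_neg (S k) s) Z ->
  (Cpow_pos 2 s * (A + B - Z) = B - A)%C.
Proof.
  intros HA HB HZ.
  set (c := fun k => (RtoC (INR (thue_morse k) + INR (thue_morse (S k)) - 1)
                      * nat_pow_neg (S k) s)%C).
  assert (Hc : is_series c (A + B - Z)%C).
  { eapply is_series_ext;
      [|exact (is_series_minus _ _ _ _ (is_series_plus _ _ _ _ HA HB) HZ)].
    intros k; unfold c; rewrite RtoC_minus, RtoC_plus.
    change (plus (plus ?a ?b) (opp ?z) = ?w) with (a + b - z = w)%C; ring. }
  assert (Hodd : is_series (fun j => c (S (2 * j))) (A + B - Z)%C).
  { apply is_series_odd_terms; [|exact Hc].
    intros j; unfold c; rewrite thue_morse_double, thue_morse_double_succ.
    replace (_ + (1 - _) - 1) with 0 by ring; apply Cmult_0_l. }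
  assert (Hpow2 : nat_pow_neg 2 s = Cinv (Cpow_pos 2 s)).
  { unfold nat_pow_neg; do 2 f_equal; simpl; ring. }
  assert (Hodd' : is_series (fun j => c (S (2 * j)))
                    (Cinv (Cpow_pos 2 s) * (B - A))%C).
  { eapply is_series_ext; [|exact (is_series_scal _ _ _ (is_series_minus _ _ _ _ HB HA))].
    intros j; unfold c.
    replace (S (S (2 * j))) with (2 * S j)%nat by lia.
    rewrite thue_morse_double, thue_morse_double_succ, nat_pow_neg_mul, Hpow2 by lia.
    rewrite RtoC_minus, RtoC_plus, RtoC_minus.
    change (scal ?a (plus ?b (opp ?z)) = ?w) with (a * (b - z) = w)%C; ring. }
  rewrite (filterlim_locally_unique _ _ _ Hodd Hodd'); field; apply Cexp_neq0.
Qed.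

Theorem theorem3 (s : C) (hs : (1 < Re s)%R) :
  exists A B Z : C,
    is_series (fun k : nat =>
       Cmult (RtoC (INR (thue_morse k))) (nat_pow_neg (S k) s)) A /\
    is_series (fun k : nat =>
       Cmult (RtoC (INR (thue_morse (S k)))) (nat_pow_neg (S k) s)) B /\
    is_series (fun k : nat => nat_pow_neg (S k) s) Z /\
    Cplus (Cmult (Cplus (Cpow_pos 2 s) 1) A)
          (Cmult (Cminus (Cpow_pos 2 s) 1) B)
    = Cmult (Cpow_pos 2 s) Z.
Proof.
  assert (Ht : forall n, Rabs (INR (thue_morse n)) <= 1).
  { intros n; rewrite Rabs_pos_eq by apply pos_INR; apply thue_morse_le_1. }
  destruct (ex_series_dirichlet_bounded _ s hs Ht) as [A HA].
  destruct (ex_series_dirichlet_bounded _ s hs (fun n => Ht (S n))) as [B HB].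
  destruct (ex_series_dirichlet_bounded (fun _ => 1) s hs) as [Z HZ].
  { intros _; rewrite Rabs_R1; apply Rle_refl. }
  assert (HZ' : is_series (fun k => nat_pow_neg (S k) s) Z).
  { eapply is_series_ext; [|exact HZ]; intros k; apply Cmult_1_l. }
  exists A, B, Z; repeat split; try assumption.
  pose proof (thue_morse_dirichlet_relation s A B Z HA HB HZ') as E.
  replace (Cpow_pos 2 s * Z)%C
    with (Cpow_pos 2 s * A + Cpow_pos 2 s * B - Cpow_pos 2 s * (A + B - Z))%C by ring.
  rewrite E; ring.
Qed.
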